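(* Let $\alpha\in[1,2]$, $1\le n\le m$, and fix a weight vector $\omega=(\omega_1,\dots,\omega_n)$ with $\omega_j\ge0$, $\sum_j\omega_j=1$. Over all $n$-tuples $(\rho_1,\dots,\rho_n)$ of $m\times m$ density matrices, the quantum Jensen–Tsallis divergence $D_\alpha^\omega(\rho_1,\dots,\rho_n)$ attains its maximum value at the degenerate matrices $\rho_j=\delta_j$, $j=1,\dots,n$, where $\delta_j=\mathrm{diag}(0,\dots,0,1,0,\dots,0)$ is the $m\times m$ diagonal matrix whose $j$-th diagonal entry is $1$ and all other entries are $0$.
   Context: An $m\times m$ density matrix is a real symmetric positive semidefinite $m\times m$ matrix with trace $1$. For $\alpha\in(0,1)\cup(1,\infty)$, the quantum Tsallis entropy is $H_\alpha(\rho)=\frac{1}{1-\alpha}\bigl(\mathrm{tr}(\rho^\alpha)-1\bigr)$ ($\rho^\alpha$ via spectral decomposition); for $\alpha=1$, $H_1(\rho)=-\mathrm{tr}(\rho\log\rho)$ is the von Neumann entropy (with $0\log0=0$). The quantum Jensen–Tsallis divergence of density matrices $\rho_1,\dots,\rho_n$ with weights $\omega$ is $$D_\alpha^{\omega}(\rho_1,\dots,\rho_n)=H_\alpha\Bigl(\sum_{j=1}^n\omega_j\rho_j\Bigr)-\sum_{j=1}^n\omega_jH_\alpha(\rho_j).$$ *)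

From Stdlib Require Import Reals Lra ClassicalEpsilon.
Open Scope R_scope.

Fixpoint rsum (n : nat) (f : nat -> R) : R :=
  match n with O => 0 | S k => rsum k f + f k end.

(* An m x m real matrix: entries A i j for i, j < m (others ignored). *)
Definition mat := nat -> nat -> R.

Definition mtrace (m : nat) (A : mat) : R := rsum m (fun i => A i i).

Definition symmetric (m : nat) (A : mat) : Prop :=
  forall i j, (i < m)%nat -> (j < m)%nat -> A i j = A j i.

Definition psd (m : nat) (A : mat) : Prop :=
  forall x : nat -> R,
    0 <= rsum m (fun i => rsum m (fun j => x i * A i j * x j)).

Definition density (m : nat) (A : mat) : Prop :=
  symmetric m A /\ psd m A /\ mtrace m A = 1.

(* Spectral decomposition A = Q diag(lam) Q^T with Q orthogonal. *)
Definition orthogonal (m : nat) (Q : mat) : Prop :=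
  forall i j, (i < m)%nat -> (j < m)%nat ->
    rsum m (fun k => Q k i * Q k j) = if Nat.eqb i j then 1 else 0.

Definition spectral (m : nat) (A : mat) (Q : mat) (lam : nat -> R) : Prop :=
  orthogonal m Q /\
  forall i j, (i < m)%nat -> (j < m)%nat ->
    A i j = rsum m (fun k => Q i k * lam k * Q j k).

(* A chosen spectral decomposition (exists for real symmetric matrices by the
   spectral theorem; default value otherwise). *)
Definition spec_choice (m : nat) (A : mat) : mat * (nat -> R) :=
  epsilon (inhabits ((fun _ _ => 0), (fun _ => 0)))
          (fun p => spectral m A (fst p) (snd p)).

(* tr f(A) via spectral decomposition: sum of f over the eigenvalues *)
Definition trf (m : nat) (f : R -> R) (A : mat) : R :=
  rsum m (fun k => f (snd (spec_choice m A) k)).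

(* x^a for x >= 0 (with 0^a = 0, a > 0) *)
Definition rpow (x a : R) : R :=
  if Rle_dec x 0 then 0 else Rpower x a.

(* x log x with 0 log 0 = 0 *)
Definition xlogx (x : R) : R :=
  if Rle_dec x 0 then 0 else x * ln x.

Definition tsallis (m : nat) (alpha : R) (A : mat) : R :=
  if Req_EM_T alpha 1 then - trf m xlogx A
  else (trf m (fun x => rpow x alpha) A - 1) / (1 - alpha).

Definition mwsum (n : nat) (w : nat -> R) (rho : nat -> mat) : mat :=
  fun a b => rsum n (fun j => w j * rho j a b).

Definition qJT (m n : nat) (alpha : R) (w : nat -> R) (rho : nat -> mat) : R :=
  tsallis m alpha (mwsum n w rho)
  - rsum n (fun j => w j * tsallis m alpha (rho j)).

(* delta j: diagonal matrix with 1 at (j,j) (0-based index), 0 elsewhere *)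
Definition delta (j : nat) : mat :=
  fun a b => if andb (Nat.eqb a j) (Nat.eqb b j) then 1 else 0.

(* Write lam_jk for the eigenvalues of rho_j and mu_l for those of the mixture
   sigma = sum_j w_j rho_j, with orthonormal eigenvectors q_jk and v_l.  Then
   mu_l = sum_jk P_jkl with P_jkl = w_j lam_jk <q_jk, v_l>^2, and Bessel's
   inequality together with the trace identity forces sum_l P_jkl = w_j lam_jk.
   Evaluating the quadratic form of sigma at a well chosen vector shows moreover
   that the coefficients P_jkl / mu_l have row sums at most 1 in l, so the
   vector (w_j lam_jk) is a substochastic image of (mu_l) and Jensen's inequality
   gives sum_jk f (w_j lam_jk) <= tr f(sigma) for f = x^alpha and f = x log x.
   The first sum splits as sum_j f (w_j) tr rho_j^alpha (resp. as
   sum_j w_j tr f(rho_j) + sum_j f (w_j)), which bounds the divergence by the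
   classical Tsallis entropy of w.  For the diagonal matrices delta_j the same
   Jensen argument gives the reverse bound tr f(sum_j w_j delta_j) <= sum_j f (w_j),
   while H_alpha (delta_j) = 0, so that the divergence at the delta_j is at least
   the entropy of w.  As [trf] reads the eigenvalues off a chosen spectral
   decomposition, all this rests on the spectral theorem for real symmetric
   matrices, obtained by Householder deflation from one real eigenvector. *)

From Pilot Require Import Defs.
From Stdlib Require Import Reals Lra Lia ClassicalEpsilon Morphisms.
From Stdlib Require Setoid.
From mathcomp Require all_boot all_order all_algebra complex spectral Rstruct.

Module SymmetricEigenpair.
Import all_boot all_order all_algebra complex spectral Rstruct.
Import Order.TTheory GRing.Theory Num.Theory.
Local Open Scope ring_scope.

Local Notation RR := Rdefinitions.R.

(* An eigenvalue of the complexified matrix is real, and a real eigenvalue of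
   a real matrix has a real eigenvector. *)
Lemma symmetric_mx_eigenvector {m : nat} (M : 'M[RR]_m.+1) : M^T = M ->
  exists r : RR, exists2 v : 'rV[RR]_m.+1, v != 0 & v *m M = r *: v.
Proof.
move=> Msym.
set Mc := map_mx (real_complex RR) M.
have herm : Mc \is hermsymmx.
  apply/is_hermitianmxP; rewrite expr0 scale1r; apply/matrixP => i j.
  rewrite !mxE -[in LHS]Msym mxE.
  exact: (esym (conjc_real _)).
have /orthomx_spectralP eqM := hermitian_normalmx herm.
have realsp := hermitian_spectral_diag_real herm.
set P := spectralmx Mc in eqM.
set d := spectral_diag Mc in eqM realsp.
have Punit : P \in unitmx by exact: spectral_unit.
set c := d 0 0.
have creal : c \is Num.real by exact: (mxOverP realsp).
exists (complex.Re c).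
have cE : c = (complex.Re c)%:C%C.
  move: creal; rewrite realE !lecE /=.
  clearbody c; case: c => a b /=.
  by case/orP => /andP [/eqP h _]; first [rewrite h | rewrite -h].
suff /det0P [v vn0 vE] : \det (M - (complex.Re c)%:M) == 0.
  exists v => //; move/eqP: vE; rewrite mulmxBr mul_mx_scalar subr_eq0.
  by move/eqP.
have : (\det (M - (complex.Re c)%:M))%:C%C == 0.
  rewrite -det_map_mx map_mxB /= map_scalar_mx /= -/Mc -cE.
  have E : Mc - c%:M = invmx P *m (diag_mx d - c%:M) *m P.
    rewrite mulmxBr mulmxBl -eqM; congr (_ - _).
    by rewrite mul_mx_scalar -scalemxAl (mulVmx Punit) scalemx1.
  rewrite E !det_mulmx det_inv.
  have -> : diag_mx d - c%:M = diag_mx (d - const_mx c).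
    by rewrite linearB /= diag_const_mx.
  by rewrite det_diag (bigD1 ord0) //= !mxE subrr mul0r mulr0 mul0r.
by move=> h; apply/eqP; apply: complexI; exact/eqP.
Qed.

Lemma symmetric_mx_unit_eigenvector {m : nat} (M : 'M[RR]_m.+1) : M^T = M ->
  exists r : RR, exists y : 'I_m.+1 -> RR,
    \sum_i y i * y i = 1 /\ forall i, \sum_j M i j * y j = r * y i.
Proof.
move=> Msym; have [r [v vn0 vE]] := symmetric_mx_eigenvector M Msym.
set s := \sum_i v 0 i * v 0 i.
have s_gt0 : 0 < s.
  have [i vi] : exists i, v 0 i != 0.
    apply/existsP; move: vn0; apply: contraR; rewrite negb_exists => /forallP h.
    by apply/eqP/rowP => i; rewrite mxE; apply/eqP; move: (h i); rewrite negbK.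
  rewrite /s (bigD1 i) //= ltr_pwDl ?sumr_ge0 // => [|j _]; last by rewrite -expr2 sqr_ge0.
  by rewrite -expr2 exprn_even_gt0 //= vi.
pose q := Num.sqrt s.
have q_gt0 : 0 < q by rewrite sqrtr_gt0.
exists r, (fun i => v 0 i / q); split.
  rewrite (eq_bigr (fun i => (v 0 i * v 0 i) / (q ^+ 2))); last first.
    by move=> i _; rewrite expr2 mulf_div.
  by rewrite -mulr_suml -/s /q sqr_sqrtr ?ltW // divff // gt_eqF.
move=> i; rewrite (eq_bigr (fun j => (v 0 j * M j i) / q)); last first.
  by move=> j _; rewrite -{1}Msym mxE mulrA [M j i * _]mulrC.
rewrite -mulr_suml mulrA; congr (_ / _).
by have := congr1 (fun X : 'rV_m.+1 => X 0 i) vE; rewrite !mxE.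
Qed.

Lemma rsum_big n (f : nat -> RR) : rsum n f = \sum_(i < n) f i.
Proof.
elim: n => [|n IH]; first by rewrite big_ord0.
by rewrite big_ord_recr /= IH.
Qed.

Lemma symmetric_unit_eigenvector (m : nat) (A : mat) : (0 < m)%coq_nat ->
  Defs.symmetric m A ->
  exists (r : RR) (x : nat -> RR), rsum m (fun i => Rmult (x i) (x i)) = R1 /\
    forall i, (i < m)%coq_nat -> rsum m (fun j => Rmult (A i j) (x j)) = Rmult r (x i).
Proof.
case: m => [/ssrnat.ltP //|m] _ Asym.
pose M : 'M[RR]_m.+1 := \matrix_(i, j) A i j.
have Msym : M^T = M.
  by apply/matrixP => i j; rewrite !mxE; apply: Asym; apply/ssrnat.ltP; exact: ltn_ord.
have [r [y [y1 yE]]] := symmetric_mx_unit_eigenvector M Msym.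
exists r, (fun k => y (inord k)); split.
  rewrite rsum_big; etransitivity; last exact: y1.
  by apply: eq_bigr => i _; rewrite inord_val.
move=> i /ssrnat.ltP im; rewrite rsum_big.
have := yE (inord i); rewrite /M.
under eq_bigr do rewrite mxE inordK //.
move=> h; etransitivity; last exact: h.
by apply: eq_bigr => j _; rewrite inord_val.
Qed.

End SymmetricEigenpair.

Open Scope R_scope.

Lemma rsum_ext n f g : (forall i, (i < n)%nat -> f i = g i) -> rsum n f = rsum n g.
Proof.
  induction n; intros H; simpl; auto.
  rewrite IHn by (intros; apply H; lia). rewrite H by lia. reflexivity.
Qed.

Lemma rsum_plus n f g : rsum n (fun i => f i + g i) = rsum n f + rsum n g.
Proof. induction n; simpl; [lra|]. rewrite IHn; lra. Qed.

Lemma rsum_minus n f g : rsum n (fun i => f i - g i) = rsum n f - rsum n g.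
Proof. induction n; simpl; [lra|]. rewrite IHn; lra. Qed.

Lemma rsum_scal_l n c f : rsum n (fun i => c * f i) = c * rsum n f.
Proof. induction n; simpl; [lra|]. rewrite IHn; lra. Qed.

Lemma rsum_scal_r n c f : rsum n (fun i => f i * c) = rsum n f * c.
Proof. induction n; simpl; [lra|]. rewrite IHn; lra. Qed.

Lemma rsum_zero n f : (forall i, (i < n)%nat -> f i = 0) -> rsum n f = 0.
Proof. induction n; intros H; simpl; [lra|]. rewrite IHn, H by (auto; lia). lra. Qed.

Lemma rsum_swap n m F :
  rsum n (fun i => rsum m (fun j => F i j)) = rsum m (fun j => rsum n (fun i => F i j)).
Proof.
  induction n; simpl.
  - symmetry; apply rsum_zero; reflexivity.
  - rewrite IHn, <- rsum_plus. reflexivity.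
Qed.

Lemma rsum_le n f g : (forall i, (i < n)%nat -> f i <= g i) -> rsum n f <= rsum n g.
Proof.
  induction n; intros H; simpl; [lra|].
  assert (f n <= g n) by (apply H; lia).
  assert (rsum n f <= rsum n g) by (apply IHn; intros; apply H; lia).
  lra.
Qed.

Lemma rsum_nonneg n f : (forall i, (i < n)%nat -> 0 <= f i) -> 0 <= rsum n f.
Proof.
  intros H. replace 0 with (rsum n (fun _ => 0)) by (apply rsum_zero; auto).
  apply rsum_le; auto.
Qed.

Lemma rsum_kronecker n j F :
  (j < n)%nat -> rsum n (fun i => if Nat.eqb i j then F i else 0) = F j.
Proof.
  induction n; intros H; [lia|]. simpl. destruct (Nat.eqb_spec n j).
  - subst j. rewrite rsum_zero; [lra|].
    intros i Hi. destruct (Nat.eqb_spec i n); [lia|auto].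
  - rewrite IHn by lia. lra.
Qed.

Lemma rsum_nonneg_eq0 n f : (forall i, (i < n)%nat -> 0 <= f i) -> rsum n f = 0 ->
  forall i, (i < n)%nat -> f i = 0.
Proof.
  induction n; intros H S i Hi; [lia|]. simpl in S.
  assert (0 <= rsum n f) by (apply rsum_nonneg; intros; apply H; lia).
  assert (0 <= f n) by (apply H; lia).
  destruct (Nat.eq_dec i n).
  - subst; lra.
  - apply IHn; [intros; apply H; lia | lra | lia].
Qed.

Lemma rsum_nonneg_term_le n f j : (forall i, (i < n)%nat -> 0 <= f i) -> (j < n)%nat ->
  f j <= rsum n f.
Proof.
  induction n; intros H Hj; [lia|]. simpl.
  assert (0 <= rsum n f) by (apply rsum_nonneg; intros; apply H; lia).
  assert (0 <= f n) by (apply H; lia).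
  destruct (Nat.eq_dec j n).
  - subst; lra.
  - assert (f j <= rsum n f) by (apply IHn; [intros; apply H; lia | lia]). lra.
Qed.

Lemma rsum_add_range n p f : rsum (n + p) f = rsum n f + rsum p (fun i => f (n + i)%nat).
Proof.
  induction p; simpl.
  - rewrite Nat.add_0_r; lra.
  - rewrite Nat.add_succ_r; simpl. rewrite IHp; lra.
Qed.

Lemma rsum_rsum_scal_r n m F y :
  rsum n (fun b => rsum m (fun k => F k b) * y b) = rsum m (fun k => rsum n (fun b => F k b * y b)).
Proof. rewrite <- rsum_swap. apply rsum_ext; intros. symmetry; apply rsum_scal_r. Qed.

Definition kd (i j : nat) : R := if Nat.eqb i j then 1 else 0.

Lemma kd_sym i j : kd i j = kd j i.
Proof. unfold kd. rewrite Nat.eqb_sym. reflexivity. Qed.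

Lemma rsum_kd_l n j F : (j < n)%nat -> rsum n (fun i => kd i j * F i) = F j.
Proof.
  intros Hj. rewrite <- (rsum_kronecker n j F Hj).
  apply rsum_ext; intros i _. unfold kd. destruct (Nat.eqb i j); ring.
Qed.

Lemma rsum_kd_r n j F : (j < n)%nat -> rsum n (fun i => kd j i * F i) = F j.
Proof.
  intros Hj. rewrite <- (rsum_kd_l n j F Hj).
  apply rsum_ext; intros i _. rewrite kd_sym. reflexivity.
Qed.

Definition dot m (x y : nat -> R) : R := rsum m (fun i => x i * y i).
Definition col (Q : mat) (l : nat) : nat -> R := fun i => Q i l.
Definition quad m (A : mat) (x y : nat -> R) : R :=
  rsum m (fun a => rsum m (fun b => x a * A a b * y b)).
Definition combination m (Q : mat) (c : nat -> R) : nat -> R :=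
  fun i => rsum m (fun l => c l * Q i l).

Lemma dot_sym m x y : dot m x y = dot m y x.
Proof. unfold dot. apply rsum_ext; intros; ring. Qed.

Lemma dot_combination m Q c y :
  dot m (combination m Q c) y = rsum m (fun l => c l * dot m (col Q l) y).
Proof.
  unfold dot, combination, col. rewrite rsum_rsum_scal_r.
  apply rsum_ext; intros l _. rewrite <- rsum_scal_l. apply rsum_ext; intros; ring.
Qed.

Lemma orthogonal_dot m Q k l : orthogonal m Q -> (k < m)%nat -> (l < m)%nat ->
  dot m (col Q k) (col Q l) = kd k l.
Proof. intros HO Hk Hl. apply HO; auto. Qed.

Lemma orthogonal_coord m Q c l : orthogonal m Q -> (l < m)%nat ->
  dot m (combination m Q c) (col Q l) = c l.
Proof.
  intros HO Hl. rewrite dot_combination.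
  rewrite (rsum_ext m _ (fun k => kd k l * c k)) by
    (intros; rewrite orthogonal_dot by auto; ring).
  apply rsum_kd_l; auto.
Qed.

Lemma orthogonal_combination_norm m Q c : orthogonal m Q ->
  dot m (combination m Q c) (combination m Q c) = dot m c c.
Proof.
  intros HO. rewrite dot_combination. unfold dot at 2.
  apply rsum_ext; intros l Hl. rewrite dot_sym, orthogonal_coord; auto.
Qed.

(* 0 <= |x - Q c|^2 = |x|^2 - |c|^2 for the coefficients c_l = <q_l, x>. *)
Lemma bessel m Q x : orthogonal m Q ->
  rsum m (fun l => dot m (col Q l) x * dot m (col Q l) x) <= dot m x x.
Proof.
  intros HO. set (c := fun l => dot m (col Q l) x). set (y := combination m Q c).
  assert (Hxy : dot m y x = dot m c c).
  { unfold y. rewrite dot_combination. reflexivity. }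
  assert (Hyy : dot m y y = dot m c c) by apply orthogonal_combination_norm, HO.
  assert (Hsq : 0 <= dot m (fun i => x i - y i) (fun i => x i - y i)).
  { apply rsum_nonneg; intros; apply Rle_0_sqr. }
  replace (dot m (fun i => x i - y i) (fun i => x i - y i))
    with (dot m x x - 2 * dot m y x + dot m y y) in Hsq.
  2: { unfold dot. rewrite <- rsum_scal_l, <- rsum_minus, <- rsum_plus.
       apply rsum_ext; intros; ring. }
  change (dot m c c <= dot m x x). lra.
Qed.

Section Spectral.
Variables (m : nat) (A Q : mat) (lam : nat -> R).
Hypothesis HS : spectral m A Q lam.

Lemma spectral_quad x y :
  quad m A x y = rsum m (fun k => lam k * dot m (col Q k) x * dot m (col Q k) y).
Proof.
  destruct HS as [_ HA]. unfold quad, dot, col.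
  transitivity (rsum m (fun a => rsum m (fun b =>
                  rsum m (fun k => x a * Q a k * (lam k * (Q b k * y b)))))).
  { apply rsum_ext; intros a Ha; apply rsum_ext; intros b Hb.
    rewrite HA by auto. rewrite <- rsum_scal_l, <- rsum_scal_r.
    apply rsum_ext; intros; ring. }
  transitivity (rsum m (fun a => rsum m (fun k =>
                  x a * Q a k * (lam k * rsum m (fun b => Q b k * y b))))).
  { apply rsum_ext; intros a Ha. rewrite rsum_swap.
    apply rsum_ext; intros k Hk. rewrite <- !rsum_scal_l. reflexivity. }
  rewrite rsum_swap. apply rsum_ext; intros k Hk.
  rewrite rsum_scal_r, (rsum_ext m _ (fun a => Q a k * x a)) by (intros; ring). ring.
Qed.

Lemma spectral_rayleigh l : (l < m)%nat -> quad m A (col Q l) (col Q l) = lam l.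
Proof.
  intros Hl. pose proof HS as [HO _]. rewrite spectral_quad.
  rewrite (rsum_ext m _ (fun k => kd k l * lam k))
    by (intros; rewrite orthogonal_dot by auto; unfold kd; destruct (Nat.eqb _ _); ring).
  apply rsum_kd_l; auto.
Qed.

Lemma spectral_eigenvector l i : (l < m)%nat -> (i < m)%nat ->
  rsum m (fun j => A i j * Q j l) = lam l * Q i l.
Proof.
  intros Hl Hi. destruct HS as [HO HA].
  transitivity (rsum m (fun k => Q i k * lam k * dot m (col Q k) (col Q l))).
  { unfold dot, col.
    rewrite (rsum_ext m _ (fun j => rsum m (fun k => Q i k * lam k * Q j k) * Q j l))
      by (intros; rewrite HA by auto; reflexivity).
    rewrite rsum_rsum_scal_r. apply rsum_ext; intros k Hk.
    rewrite <- rsum_scal_l. apply rsum_ext; intros; ring. }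
  rewrite (rsum_ext m _ (fun k => kd k l * (Q i k * lam k)))
    by (intros; rewrite orthogonal_dot by auto; ring).
  rewrite rsum_kd_l by auto. ring.
Qed.

Lemma spectral_trace : mtrace m A = rsum m lam.
Proof.
  destruct HS as [HO HA]. unfold mtrace.
  rewrite (rsum_ext m _ (fun i => rsum m (fun k => lam k * (Q i k * Q i k))))
    by (intros; rewrite HA by auto; apply rsum_ext; intros; ring).
  rewrite rsum_swap. apply rsum_ext; intros k Hk.
  rewrite rsum_scal_l, (HO k k Hk Hk), Nat.eqb_refl. ring.
Qed.

Lemma spectral_psd_nonneg l : psd m A -> (l < m)%nat -> 0 <= lam l.
Proof. intros HP Hl. rewrite <- spectral_rayleigh by auto. apply HP. Qed.

End Spectral.

Definition mmul m (P Q : mat) : mat := fun i j => rsum m (fun k => P i k * Q k j).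
Definition transpose (P : mat) : mat := fun i j => P j i.
Definition scale_cols (Q : mat) (lam : nat -> R) : mat := fun i k => Q i k * lam k.
Definition meq m (P Q : mat) : Prop :=
  forall i j, (i < m)%nat -> (j < m)%nat -> P i j = Q i j.

#[local] Instance meq_equivalence m : Equivalence (meq m).
Proof.
  split.
  - intros P i j _ _. reflexivity.
  - intros P Q H i j Hi Hj. symmetry; auto.
  - intros P Q S H1 H2 i j Hi Hj. rewrite H1, H2; auto.
Qed.

#[local] Instance mmul_proper m : Proper (meq m ==> meq m ==> meq m) (mmul m).
Proof.
  intros P P' HP Q Q' HQ i j Hi Hj. unfold mmul.
  apply rsum_ext; intros k Hk. rewrite HP, HQ; auto.
Qed.

#[local] Instance transpose_proper m : Proper (meq m ==> meq m) transpose.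
Proof. intros P P' HP i j Hi Hj. apply HP; auto. Qed.

Lemma mmul_assoc m P Q S : meq m (mmul m (mmul m P Q) S) (mmul m P (mmul m Q S)).
Proof.
  intros i j _ _. unfold mmul. rewrite rsum_rsum_scal_r.
  apply rsum_ext; intros. rewrite <- rsum_scal_l. apply rsum_ext; intros; ring.
Qed.

Lemma mmul_kd_l m P : meq m (mmul m kd P) P.
Proof. intros i j Hi _. apply (rsum_kd_r m i (fun k => P k j)); auto. Qed.

Lemma mmul_kd_r m P : meq m (mmul m P kd) P.
Proof.
  intros i j _ Hj. unfold mmul.
  rewrite (rsum_ext m _ (fun k => kd k j * P i k)) by (intros; ring).
  apply rsum_kd_l; auto.
Qed.

Lemma transpose_mmul m P Q : meq m (transpose (mmul m P Q)) (mmul m (transpose Q) (transpose P)).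
Proof. intros i j _ _. unfold transpose, mmul. apply rsum_ext; intros; ring. Qed.

Lemma mmul_scale_cols m P Q lam :
  meq m (mmul m P (scale_cols Q lam)) (scale_cols (mmul m P Q) lam).
Proof. intros i j _ _. unfold mmul, scale_cols. rewrite <- rsum_scal_r. apply rsum_ext; intros; ring. Qed.

Lemma orthogonal_meq m Q : orthogonal m Q <-> meq m (mmul m (transpose Q) Q) kd.
Proof. reflexivity. Qed.

Lemma spectral_meq m A Q lam :
  spectral m A Q lam <-> orthogonal m Q /\ meq m A (mmul m (scale_cols Q lam) (transpose Q)).
Proof. reflexivity. Qed.

Lemma spectral_orthogonal_similar m A H Q lam :
  orthogonal m H -> meq m (mmul m H (transpose H)) kd ->
  spectral m (mmul m (mmul m (transpose H) A) H) Q lam ->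
  spectral m A (mmul m H Q) lam.
Proof.
  rewrite orthogonal_meq, !spectral_meq, orthogonal_meq, orthogonal_meq.
  intros HH HH' [HQ HC]. split.
  - rewrite transpose_mmul, mmul_assoc, <- (mmul_assoc m (transpose H)), HH, mmul_kd_l.
    exact HQ.
  - transitivity (mmul m (mmul m H (mmul m (mmul m (transpose H) A) H)) (transpose H)).
    + rewrite <- !mmul_assoc, HH', mmul_kd_l, mmul_assoc, HH', mmul_kd_r. reflexivity.
    + rewrite HC, transpose_mmul, <- mmul_scale_cols, !mmul_assoc. reflexivity.
Qed.

Section Householder.
Variables (k : nat) (v : nat -> R).
Hypothesis Hv : dot (S k) v v = 1.

Let u i := v i - kd i k.
Let uu := dot (S k) u u.
(* The factor 2 / |u|^2; if u = 0 then v is already the k-th unit vector. *)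
Let c := if Req_EM_T uu 0 then 0 else 2 / uu.

Definition householder : mat := fun i j => kd i j - c * u i * u j.

Lemma householder_sym i j : householder i j = householder j i.
Proof. unfold householder. rewrite kd_sym. ring. Qed.

Lemma householder_norm : uu = 2 - 2 * v k.
Proof.
  unfold uu, dot, u.
  transitivity (dot (S k) v v - 2 * rsum (S k) (fun i => kd i k * v i)
                + rsum (S k) (fun i => kd i k * 1)).
  { unfold dot. rewrite <- rsum_scal_l, <- rsum_minus, <- rsum_plus.
    apply rsum_ext; intros. unfold kd. destruct (Nat.eqb i k); ring. }
  rewrite Hv, !rsum_kd_l by lia. ring.
Qed.

Lemma householder_orthogonal : orthogonal (S k) householder.
Proof.
  intros i j Hi Hj. change (rsum (S k) (fun l => householder l i * householder l j) = kd i j).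
  rewrite (rsum_ext (S k) _ (fun l => householder i l * householder j l))
    by (intros l _; rewrite !(householder_sym _ l); reflexivity).
  unfold householder.
  transitivity (rsum (S k) (fun l => kd i l * kd j l) - c * u j * rsum (S k) (fun l => kd i l * u l)
                - c * u i * rsum (S k) (fun l => kd j l * u l) + u i * u j * (c * c * uu)).
  { unfold uu, dot. rewrite <- !rsum_scal_l, <- !rsum_minus, <- rsum_plus.
    apply rsum_ext; intros l _. ring. }
  rewrite !rsum_kd_r by auto.
  replace (c * c * uu) with (2 * c) by (unfold c; destruct (Req_EM_T uu 0); [ring | field; auto]).
  rewrite (kd_sym j i). ring.
Qed.

Lemma householder_involutive : meq (S k) (mmul (S k) householder (transpose householder)) kd.
Proof.
  intros i j Hi Hj.
  transitivity (rsum (S k) (fun l => householder l i * householder l j));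
    [|apply householder_orthogonal; auto].
  unfold mmul, transpose. apply rsum_ext; intros l _. rewrite (householder_sym i l), (householder_sym j l). reflexivity.
Qed.

Lemma householder_last_col i : (i < S k)%nat -> householder i k = v i.
Proof.
  intros Hi. unfold householder, c. pose proof householder_norm as E.
  destruct (Req_EM_T uu 0) as [H0|H0].
  - assert (Hu : u i * u i = 0).
    { apply (rsum_nonneg_eq0 (S k) (fun i => u i * u i)); auto. intros; nra. }
    unfold u in Hu. assert (v i - kd i k = 0) by nra. lra.
  - unfold u at 2. unfold kd at 2. rewrite Nat.eqb_refl.
    unfold u. field_simplify; [|lra]. rewrite E. field. lra.
Qed.

End Householder.

Definition border k (Q' : mat) : mat :=
  fun i l => if Nat.eqb l k then kd i k else if Nat.eqb i k then 0 else Q' i l.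

Lemma spectral_border k (C Q' : mat) (mu' : nat -> R) (r : R) :
  symmetric (S k) C -> (forall i, (i < S k)%nat -> C i k = r * kd i k) ->
  spectral k C Q' mu' ->
  spectral (S k) C (border k Q') (fun l => if Nat.eqb l k then r else mu' l).
Proof.
  intros Cs Ck [HO HA]. unfold border. split.
  - intros i j Hi Hj. cbn [rsum].
    rewrite (rsum_ext k _ (fun a => (if i =? k then 0 else Q' a i) * (if j =? k then 0 else Q' a j))).
    2: { intros a Ha. unfold kd. destruct (Nat.eqb_spec a k); [lia|].
         destruct (i =? k), (j =? k); reflexivity. }
    unfold kd. rewrite !Nat.eqb_refl.
    destruct (Nat.eqb_spec i k); destruct (Nat.eqb_spec j k).
    + subst. rewrite Nat.eqb_refl, rsum_zero by (intros; ring). ring.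
    + rewrite rsum_zero by (intros; ring). destruct (Nat.eqb_spec i j); [lia|ring].
    + rewrite rsum_zero by (intros; ring). destruct (Nat.eqb_spec i j); [lia|ring].
    + rewrite <- (HO i j) by lia. ring.
  - intros i j Hi Hj. cbn [rsum].
    rewrite (rsum_ext k _ (fun a => (if i =? k then 0 else Q' i a) * mu' a * (if j =? k then 0 else Q' j a))).
    2: { intros a Ha. destruct (Nat.eqb_spec a k); [lia|]. reflexivity. }
    rewrite Nat.eqb_refl.
    destruct (Nat.eqb_spec i k) as [Ei|Ei]; [|destruct (Nat.eqb_spec j k) as [Ej|Ej]].
    + subst i. rewrite Cs, Ck by auto. rewrite rsum_zero by (intros; ring).
      unfold kd. rewrite Nat.eqb_refl. ring.
    + subst j. rewrite Ck by auto. rewrite rsum_zero by (intros; ring).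
      unfold kd. destruct (Nat.eqb_spec i k); [lia|ring].
    + rewrite HA by lia. unfold kd. destruct (Nat.eqb_spec i k); [lia|ring].
Qed.

Section Deflation.
Variables (k : nat) (A : mat) (r : R) (v : nat -> R).
Hypothesis HA : symmetric (S k) A.
Hypothesis Hv : dot (S k) v v = 1.
Hypothesis Hr : forall i, (i < S k)%nat -> rsum (S k) (fun j => A i j * v j) = r * v i.

Let H := householder k v.
Let C := mmul (S k) (mmul (S k) (transpose H) A) H.

Lemma deflation_symmetric : symmetric (S k) C.
Proof.
  intros i j Hi Hj. unfold C, mmul, transpose.
  rewrite !rsum_rsum_scal_r, rsum_swap.
  apply rsum_ext; intros a Ha. apply rsum_ext; intros b Hb. rewrite (HA a b) by auto. ring.
Qed.

Lemma deflation_last_col i : (i < S k)%nat -> C i k = r * kd i k.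
Proof.
  intros Hi. unfold C, mmul, transpose.
  transitivity (rsum (S k) (fun a => H a i * rsum (S k) (fun b => A a b * v b))).
  { rewrite rsum_rsum_scal_r. apply rsum_ext; intros a Ha. rewrite <- rsum_scal_l.
    apply rsum_ext; intros b Hb. unfold H. rewrite householder_last_col by auto. ring. }
  rewrite (rsum_ext (S k) _ (fun a => r * (H a i * H a k))).
  2: { intros a Ha. rewrite Hr by auto. unfold H. rewrite householder_last_col by auto. ring. }
  rewrite rsum_scal_l. f_equal. apply householder_orthogonal; auto; lia.
Qed.

End Deflation.

Theorem spectral_exists m A : symmetric m A -> exists Q lam, spectral m A Q lam.
Proof.
  revert A; induction m as [|k IH]; intros A HA.
  - exists (fun _ _ => 0), (fun _ => 0). split; intros i j Hi; inversion Hi.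
  - destruct (SymmetricEigenpair.symmetric_unit_eigenvector (S k) A (Nat.lt_0_succ k) HA)
      as [r [v [Hv Hr]]].
    set (H := householder k v).
    set (C := mmul (S k) (mmul (S k) (transpose H) A) H).
    pose proof (deflation_symmetric k A v HA) as Cs.
    pose proof (deflation_last_col k A r v Hv Hr) as Ck.
    destruct (IH C) as [Q' [mu' HQ']].
    { intros i j Hi Hj. apply Cs; lia. }
    exists (mmul (S k) H (border k Q')), (fun l => if Nat.eqb l k then r else mu' l).
    apply spectral_orthogonal_similar.
    + apply householder_orthogonal; exact Hv.
    + apply householder_involutive; exact Hv.
    + apply spectral_border; auto.
Qed.

Lemma spec_choice_spectral m A : symmetric m A ->
  spectral m A (fst (spec_choice m A)) (snd (spec_choice m A)).
Proof.
  intros HA. unfold spec_choice.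
  apply (epsilon_spec (inhabits ((fun _ _ => 0), (fun _ => 0)))
                      (fun p => spectral m A (fst p) (snd p))).
  destruct (spectral_exists m A HA) as [Q [lam H]]. exists (Q, lam). exact H.
Qed.

Definition has_supporting_lines (f : R -> R) : Prop :=
  forall x, 0 < x -> exists s, forall z, 0 <= z -> f x + s * (z - x) <= f z.

(* The missing mass sits at 0, which is harmless since f 0 = 0 puts the
   supporting lines below the origin. *)
Lemma jensen_substochastic (f : R -> R) L (c y : nat -> R) :
  f 0 = 0 -> has_supporting_lines f ->
  (forall l, (l < L)%nat -> 0 <= c l) -> (forall l, (l < L)%nat -> 0 <= y l) ->
  rsum L c <= 1 ->
  f (rsum L (fun l => c l * y l)) <= rsum L (fun l => c l * f (y l)).
Proof.
  intros F0 Hf Hc Hy HC.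
  assert (X0 : 0 <= rsum L (fun l => c l * y l))
    by (apply rsum_nonneg; intros; apply Rmult_le_pos; auto).
  set (x := rsum L (fun l => c l * y l)) in *.
  destruct X0 as [Xpos|X0].
  - destruct (Hf x Xpos) as [s Hs].
    assert (Hs0 : f x - s * x <= 0) by (specialize (Hs 0 (Rle_refl 0)); rewrite F0 in Hs; lra).
    assert (Hline : rsum L (fun l => c l * (f x + s * (y l - x))) <= rsum L (fun l => c l * f (y l)))
      by (apply rsum_le; intros; apply Rmult_le_compat_l; auto).
    replace (rsum L (fun l => c l * (f x + s * (y l - x))))
      with (rsum L c * (f x - s * x) + s * rsum L (fun l => c l * y l)) in Hline.
    2: { rewrite <- rsum_scal_l, <- rsum_scal_r, <- rsum_plus. apply rsum_ext; intros; ring. }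
    fold x in Hline.
    assert (0 <= rsum L c) by (apply rsum_nonneg; auto).
    nra.
  - rewrite <- X0, F0. right. symmetry. apply rsum_zero. intros l Hl.
    assert (Hcy : c l * y l = 0).
    { apply (rsum_nonneg_eq0 L (fun l => c l * y l)); auto.
      intros; apply Rmult_le_pos; auto. }
    destruct (Rmult_integral _ _ Hcy) as [E|E]; rewrite E; [ring | rewrite F0; ring].
Qed.

Lemma rpow_0 a : rpow 0 a = 0.
Proof. unfold rpow. destruct (Rle_dec 0 0); [reflexivity | lra]. Qed.

Lemma rpow_pos x a : 0 < x -> rpow x a = Rpower x a.
Proof. intros H. unfold rpow. destruct (Rle_dec x 0); [lra | reflexivity]. Qed.

Lemma rpow_1 a : rpow 1 a = 1.
Proof. rewrite rpow_pos by lra. unfold Rpower. rewrite ln_1, Rmult_0_r, exp_0. reflexivity. Qed.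

Lemma rpow_mult a b al : 0 <= a -> 0 <= b -> rpow (a * b) al = rpow a al * rpow b al.
Proof.
  intros [Ha|Ha] [Hb|Hb]; subst; rewrite ?Rmult_0_l, ?Rmult_0_r, ?rpow_0; try ring.
  rewrite !rpow_pos by (auto; apply Rmult_lt_0_compat; auto).
  symmetry; apply Rpower_mult_distr; auto.
Qed.

Lemma Rpower_pred x a : 0 < x -> x * Rpower x (a - 1) = Rpower x a.
Proof. intros H. rewrite <- (Rpower_1 x H) at 1. rewrite <- Rpower_plus. f_equal; ring. Qed.

Lemma rpow_le_id x a : 0 <= x <= 1 -> 1 <= a -> rpow x a <= x.
Proof.
  intros [[H0|H0] H1] Ha; [|subst; rewrite rpow_0; lra].
  rewrite rpow_pos, <- (Rpower_pred x a H0) by auto.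
  assert (Rpower x (a - 1) <= Rpower 1 (a - 1)) by (apply Rle_Rpower_l; lra).
  replace (Rpower 1 (a - 1)) with 1 in H by (rewrite <- (rpow_pos 1), rpow_1 by lra; reflexivity).
  nra.
Qed.

(* Mean value theorem plus monotonicity of the derivative a x^(a-1). *)
Lemma Rpower_tangent_le a x y : 1 <= a -> 0 < x -> 0 < y ->
  Rpower x a + a * Rpower x (a - 1) * (y - x) <= Rpower y a.
Proof.
  intros Ha Hx Hy.
  assert (D : forall c, 0 < c ->
            derivable_pt_lim (fun z => Rpower z a) c (a * Rpower c (a - 1)))
    by (intros; apply derivable_pt_lim_power; auto).
  destruct (Rtotal_order x y) as [Hxy|[Hxy|Hxy]].
  - destruct (MVT_cor2 (fun z => Rpower z a) (fun c => a * Rpower c (a - 1)) x y Hxy)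
      as [c [Hc1 Hc2]]; [intros c Hc; apply D; lra|].
    assert (Rpower x (a - 1) <= Rpower c (a - 1)) by (apply Rle_Rpower_l; lra).
    assert (0 <= a * (Rpower c (a - 1) - Rpower x (a - 1)) * (y - x))
      by (apply Rmult_le_pos; [apply Rmult_le_pos|]; lra).
    simpl in Hc1. lra.
  - subst. lra.
  - destruct (MVT_cor2 (fun z => Rpower z a) (fun c => a * Rpower c (a - 1)) y x Hxy)
      as [c [Hc1 Hc2]]; [intros c Hc; apply D; lra|].
    assert (Rpower c (a - 1) <= Rpower x (a - 1)) by (apply Rle_Rpower_l; lra).
    assert (0 <= a * (Rpower x (a - 1) - Rpower c (a - 1)) * (x - y))
      by (apply Rmult_le_pos; [apply Rmult_le_pos|]; lra).
    simpl in Hc1. lra.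
Qed.

Lemma rpow_supporting_lines a : 1 <= a -> has_supporting_lines (fun x => rpow x a).
Proof.
  intros Ha x Hx. exists (a * Rpower x (a - 1)). intros z [Hz|Hz].
  - rewrite !rpow_pos by auto. apply Rpower_tangent_le; auto.
  - subst z. rewrite rpow_0, rpow_pos by auto.
    rewrite <- (Rpower_pred x a Hx) at 1.
    assert (0 <= x * Rpower x (a - 1) * (a - 1))
      by (apply Rmult_le_pos; [apply Rmult_le_pos; [lra | unfold Rpower; left; apply exp_pos] | lra]).
    nra.
Qed.

Lemma xlogx_0 : xlogx 0 = 0.
Proof. unfold xlogx. destruct (Rle_dec 0 0); [reflexivity | lra]. Qed.

Lemma xlogx_pos x : 0 < x -> xlogx x = x * ln x.
Proof. intros H. unfold xlogx. destruct (Rle_dec x 0); [lra | reflexivity]. Qed.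

Lemma xlogx_1 : xlogx 1 = 0.
Proof. rewrite xlogx_pos, ln_1 by lra. ring. Qed.

Lemma xlogx_mult a b : 0 <= a -> 0 <= b -> xlogx (a * b) = a * xlogx b + b * xlogx a.
Proof.
  intros [Ha|Ha] [Hb|Hb]; subst; rewrite ?Rmult_0_l, ?Rmult_0_r, ?xlogx_0; try ring.
  rewrite !xlogx_pos, ln_mult by (auto; apply Rmult_lt_0_compat; auto). ring.
Qed.

(* The supporting line at x has slope 1 + ln x; the inequality is ln (x/z) <= x/z - 1. *)
Lemma xlogx_supporting_lines : has_supporting_lines xlogx.
Proof.
  intros x Hx. exists (1 + ln x). intros z [Hz|Hz].
  - rewrite !xlogx_pos by auto.
    assert (Hq : 0 < x / z) by (apply Rdiv_lt_0_compat; auto).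
    assert (L : ln (x / z) <= x / z - 1)
      by (pose proof (exp_ineq1_le (ln (x / z))) as E; rewrite exp_ln in E; lra).
    unfold Rdiv in L; rewrite ln_mult, ln_Rinv in L by (auto; apply Rinv_0_lt_compat; auto).
    assert (z * (ln x - ln z) <= z * (x / z - 1)) by (apply Rmult_le_compat_l; lra).
    replace (z * (x / z - 1)) with (x - z) in H by (field; lra).
    nra.
  - subst z. rewrite xlogx_0, xlogx_pos by auto. lra.
Qed.

Lemma rsum_le_eq n f g : (forall i, (i < n)%nat -> f i <= g i) -> rsum n f = rsum n g ->
  forall i, (i < n)%nat -> f i = g i.
Proof.
  intros Hle Heq i Hi.
  enough (g i - f i = 0) by lra.
  apply (rsum_nonneg_eq0 n (fun i => g i - f i)); auto.
  - intros; specialize (Hle i0 H); lra.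
  - rewrite rsum_minus; lra.
Qed.

Lemma quad_mwsum m n w rho x y :
  quad m (mwsum n w rho) x y = rsum n (fun j => w j * quad m (rho j) x y).
Proof.
  unfold quad, mwsum.
  transitivity (rsum m (fun a => rsum m (fun b => rsum n (fun j => w j * (x a * rho j a b * y b))))).
  { apply rsum_ext; intros a Ha; apply rsum_ext; intros b Hb.
    rewrite <- rsum_scal_l, <- rsum_scal_r. apply rsum_ext; intros; ring. }
  transitivity (rsum m (fun a => rsum n (fun j => w j * rsum m (fun b => x a * rho j a b * y b)))).
  { apply rsum_ext; intros a Ha. rewrite rsum_swap. apply rsum_ext; intros. apply rsum_scal_l. }
  rewrite rsum_swap. apply rsum_ext; intros j Hj. apply rsum_scal_l.
Qed.

Lemma mtrace_mwsum m n w rho :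
  mtrace m (mwsum n w rho) = rsum n (fun j => w j * mtrace m (rho j)).
Proof. unfold mtrace, mwsum. rewrite rsum_swap. apply rsum_ext; intros. apply rsum_scal_l. Qed.

Section Mixture.
Variables (f : R -> R) (m n : nat) (w : nat -> R) (rho Qs : nat -> mat)
  (lams : nat -> nat -> R) (V : mat) (mu : nat -> R).
Hypothesis F0 : f 0 = 0.
Hypothesis Hf : has_supporting_lines f.
Hypothesis Hw : forall j, (j < n)%nat -> 0 <= w j.
Hypothesis Hw1 : rsum n w = 1.
Hypothesis HS : forall j, (j < n)%nat -> spectral m (rho j) (Qs j) (lams j).
Hypothesis Hl0 : forall j k, (j < n)%nat -> (k < m)%nat -> 0 <= lams j k.
Hypothesis Hl1 : forall j, (j < n)%nat -> rsum m (lams j) = 1.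
Hypothesis HV : spectral m (mwsum n w rho) V mu.

Let G j k l := dot m (col (Qs j) k) (col V l).
Let P j k l := w j * lams j k * (G j k l * G j k l).

Lemma mixture_quad x :
  quad m (mwsum n w rho) x x =
  rsum n (fun j => w j * rsum m (fun k => lams j k * (dot m (col (Qs j) k) x * dot m (col (Qs j) k) x))).
Proof.
  rewrite quad_mwsum. apply rsum_ext; intros j Hj. rewrite (spectral_quad _ _ _ _ (HS j Hj)).
  f_equal. apply rsum_ext; intros; ring.
Qed.

Lemma mixture_quad_ge j k x : (j < n)%nat -> (k < m)%nat ->
  w j * lams j k * (dot m (col (Qs j) k) x * dot m (col (Qs j) k) x) <= quad m (mwsum n w rho) x x.
Proof.
  intros Hj Hk. rewrite mixture_quad, Rmult_assoc.
  pose (c j k := lams j k * (dot m (col (Qs j) k) x * dot m (col (Qs j) k) x)).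
  assert (Hc : forall j k, (j < n)%nat -> (k < m)%nat -> 0 <= c j k)
    by (intros; apply Rmult_le_pos; [auto | apply Rle_0_sqr]).
  change (w j * c j k <= rsum n (fun j => w j * rsum m (c j))).
  apply Rle_trans with (w j * rsum m (c j)).
  - apply Rmult_le_compat_l; auto. apply rsum_nonneg_term_le; auto.
  - apply (rsum_nonneg_term_le n (fun j => w j * rsum m (c j))); auto.
    intros; apply Rmult_le_pos; auto. apply rsum_nonneg; auto.
Qed.

Lemma P_nonneg j k l : (j < n)%nat -> (k < m)%nat -> 0 <= P j k l.
Proof. intros. unfold P. apply Rmult_le_pos; [apply Rmult_le_pos; auto | apply Rle_0_sqr]. Qed.

Lemma mixture_eigenvalue l : (l < m)%nat -> rsum n (fun j => rsum m (fun k => P j k l)) = mu l.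
Proof.
  intros Hl. rewrite <- (spectral_rayleigh _ _ _ _ HV l Hl), mixture_quad.
  apply rsum_ext; intros j Hj. rewrite <- rsum_scal_l. apply rsum_ext; intros k Hk.
  unfold P, G. ring.
Qed.

Lemma mixture_eigenvalue_nonneg l : (l < m)%nat -> 0 <= mu l.
Proof.
  intros Hl. rewrite <- mixture_eigenvalue by auto.
  apply rsum_nonneg; intros j Hj. apply rsum_nonneg; intros k Hk. apply P_nonneg; auto.
Qed.

Lemma mixture_eigenvalue_zero j k l : (j < n)%nat -> (k < m)%nat -> (l < m)%nat ->
  mu l = 0 -> P j k l = 0.
Proof.
  intros Hj Hk Hl H0. rewrite <- (mixture_eigenvalue l Hl) in H0.
  assert (Hs : rsum m (fun k => P j k l) = 0).
  { apply (rsum_nonneg_eq0 n (fun j => rsum m (fun k => P j k l))); auto.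
    intros; apply rsum_nonneg; intros; apply P_nonneg; auto. }
  apply (rsum_nonneg_eq0 m (fun k => P j k l)); auto. intros; apply P_nonneg; auto.
Qed.

Lemma P_row_sum_le j k : (j < n)%nat -> (k < m)%nat -> rsum m (fun l => P j k l) <= w j * lams j k.
Proof.
  intros Hj Hk. destruct (HS j Hj) as [HOj _]. destruct HV as [HO _].
  pose proof (bessel m V (col (Qs j) k) HO) as B.
  rewrite orthogonal_dot in B by auto. unfold kd in B. rewrite Nat.eqb_refl in B.
  unfold P. rewrite rsum_scal_l.
  rewrite (rsum_ext m _ (fun l => dot m (col V l) (col (Qs j) k) * dot m (col V l) (col (Qs j) k)))
    by (intros; unfold G; rewrite dot_sym; reflexivity).
  assert (0 <= w j * lams j k) by (apply Rmult_le_pos; auto).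
  rewrite <- (Rmult_1_r (w j * lams j k)) at 2. apply Rmult_le_compat_l; auto.
Qed.

(* The trace identity sum_l mu_l = 1 = sum_jk w_j lam_jk turns Bessel into Parseval. *)
Lemma P_row_sum j k : (j < n)%nat -> (k < m)%nat -> rsum m (fun l => P j k l) = w j * lams j k.
Proof.
  intros Hj Hk.
  assert (Hmu : rsum m mu = 1).
  { rewrite <- (spectral_trace _ _ _ _ HV), mtrace_mwsum, <- Hw1.
    apply rsum_ext; intros j' Hj'. rewrite (spectral_trace _ _ _ _ (HS j' Hj')), Hl1 by auto. ring. }
  assert (Htotal : rsum n (fun j => rsum m (fun k => rsum m (fun l => P j k l)))
                   = rsum n (fun j => rsum m (fun k => w j * lams j k))).
  { rewrite (rsum_ext n _ (fun j => rsum m (fun l => rsum m (fun k => P j k l))))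
      by (intros; apply rsum_swap).
    rewrite rsum_swap, (rsum_ext m _ mu) by (intros; apply mixture_eigenvalue; auto).
    rewrite Hmu, (rsum_ext n _ w) by (intros; rewrite rsum_scal_l, Hl1; auto; ring).
    symmetry; exact Hw1. }
  apply (rsum_le_eq m (fun k => rsum m (fun l => P j k l)) (fun k => w j * lams j k)); auto.
  - intros; apply P_row_sum_le; auto.
  - apply (rsum_le_eq n (fun j => rsum m (fun k => rsum m (fun l => P j k l)))
                        (fun j => rsum m (fun k => w j * lams j k))); auto.
    intros; apply rsum_le; intros; apply P_row_sum_le; auto.
Qed.

(* Transfer coefficients T_jkl = P_jkl / mu_l, written as w_j lam_jk G_jkl beta_jkl. *)
Let beta j k l := if Req_EM_T (mu l) 0 then 0 else G j k l / mu l.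
Let T j k l := w j * lams j k * (G j k l * beta j k l).

Lemma G_beta_nonneg j k l : (l < m)%nat -> 0 <= G j k l * beta j k l.
Proof.
  intros Hl. unfold beta. destruct (Req_EM_T (mu l) 0); [lra|].
  pose proof (mixture_eigenvalue_nonneg l Hl).
  unfold Rdiv. rewrite <- Rmult_assoc.
  apply Rmult_le_pos; [apply Rle_0_sqr | left; apply Rinv_0_lt_compat; lra].
Qed.

Lemma T_nonneg j k l : (j < n)%nat -> (k < m)%nat -> (l < m)%nat -> 0 <= T j k l.
Proof. intros. unfold T. apply Rmult_le_pos; [apply Rmult_le_pos; auto | apply G_beta_nonneg; auto]. Qed.

Lemma T_mul_mu j k l : (j < n)%nat -> (k < m)%nat -> (l < m)%nat -> T j k l * mu l = P j k l.
Proof.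
  intros Hj Hk Hl. unfold T, beta. destruct (Req_EM_T (mu l) 0) as [E|E].
  - rewrite mixture_eigenvalue_zero by auto. ring.
  - unfold P. field. auto.
Qed.

(* Test the quadratic form of the mixture on x = sum_l beta_jkl v_l. *)
Lemma T_row_sum_le j k : (j < n)%nat -> (k < m)%nat -> rsum m (fun l => T j k l) <= 1.
Proof.
  intros Hj Hk. pose proof HV as [HO _].
  set (tau := rsum m (fun l => G j k l * beta j k l)).
  set (x := combination m V (beta j k)).
  assert (Htau : 0 <= tau) by (apply rsum_nonneg; intros; apply G_beta_nonneg; auto).
  assert (Hqx : dot m (col (Qs j) k) x = tau).
  { unfold x. rewrite dot_sym, dot_combination. apply rsum_ext; intros l _.
    unfold G. rewrite (dot_sym m (col V l)). ring. }
  assert (Hquad : quad m (mwsum n w rho) x x = tau).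
  { rewrite (spectral_quad _ _ _ _ HV). unfold tau. apply rsum_ext; intros l Hl.
    unfold x. rewrite !(dot_sym m (col V l)), orthogonal_coord by auto.
    unfold beta. destruct (Req_EM_T (mu l) 0); [ring | field; auto]. }
  pose proof (mixture_quad_ge j k x Hj Hk) as Hge. rewrite Hqx, Hquad in Hge.
  replace (rsum m (fun l => T j k l)) with (w j * lams j k * tau)
    by (unfold T, tau; rewrite rsum_scal_l; reflexivity).
  assert (0 <= w j * lams j k) by (apply Rmult_le_pos; auto).
  destruct Htau as [Htau|Htau]; [|rewrite <- Htau; lra].
  apply (Rmult_le_reg_r tau); auto. lra.
Qed.

Lemma mixture_majorization :
  rsum n (fun j => rsum m (fun k => f (w j * lams j k))) <= rsum m (fun l => f (mu l)).
Proof.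
  assert (Hjensen : forall j k, (j < n)%nat -> (k < m)%nat ->
            f (w j * lams j k) <= rsum m (fun l => T j k l * f (mu l))).
  { intros j k Hj Hk. rewrite <- (P_row_sum j k Hj Hk).
    rewrite (rsum_ext m _ (fun l => T j k l * mu l)) by (intros; symmetry; apply T_mul_mu; auto).
    apply jensen_substochastic; auto.
    - intros; apply T_nonneg; auto.
    - intros; apply mixture_eigenvalue_nonneg; auto.
    - apply T_row_sum_le; auto. }
  eapply Rle_trans.
  { apply rsum_le; intros j Hj. apply rsum_le; intros k Hk. apply Hjensen; auto. }
  right.
  rewrite (rsum_ext n _ (fun j => rsum m (fun l => rsum m (fun k => T j k l * f (mu l)))))
    by (intros; apply rsum_swap).
  rewrite rsum_swap. apply rsum_ext; intros l Hl.
  destruct (Req_EM_T (mu l) 0) as [Z|Z].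
  - rewrite Z, F0. apply rsum_zero; intros. apply rsum_zero; intros. ring.
  - transitivity (rsum n (fun j => rsum m (fun k => T j k l)) * f (mu l)).
    { rewrite <- rsum_scal_r. apply rsum_ext; intros. apply rsum_scal_r. }
    replace (rsum n (fun j => rsum m (fun k => T j k l))) with 1; [ring|].
    symmetry. apply (Rmult_eq_reg_r (mu l)); auto. rewrite Rmult_1_l.
    transitivity (rsum n (fun j => rsum m (fun k => P j k l))); [|apply mixture_eigenvalue; auto].
    rewrite <- rsum_scal_r. apply rsum_ext; intros j Hj.
    rewrite <- rsum_scal_r. apply rsum_ext; intros k Hk. apply T_mul_mu; auto.
Qed.

End Mixture.

Lemma orthogonal_row_norm_le m Q a : orthogonal m Q -> (a < m)%nat ->
  rsum m (fun l => Q a l * Q a l) <= 1.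
Proof.
  intros HO Ha. pose proof (bessel m Q (fun i => kd i a) HO) as B.
  assert (Hdot : forall x, dot m x (fun i => kd i a) = x a).
  { intros x. unfold dot. rewrite (rsum_ext m _ (fun i => kd i a * x i)) by (intros; ring).
    apply rsum_kd_l; auto. }
  replace (dot m (fun i => kd i a) (fun i => kd i a)) with 1 in B
    by (rewrite Hdot; unfold kd; rewrite Nat.eqb_refl; reflexivity).
  eapply Rle_trans; [|exact B]. right. apply rsum_ext; intros l _. rewrite Hdot. reflexivity.
Qed.

(* The eigenvalues are averages lam_l = sum_a Q_al^2 d_a of the diagonal, with
   column sums 1 and row sums r_a <= 1; the trace forces r_a = 1 wherever d_a <> 0. *)
Lemma spectral_diagonal_le (f : R -> R) m A Q lam d : f 0 = 0 -> has_supporting_lines f ->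
  spectral m A Q lam ->
  (forall a b, (a < m)%nat -> (b < m)%nat -> A a b = kd a b * d a) ->
  (forall a, (a < m)%nat -> 0 <= d a) ->
  rsum m (fun l => f (lam l)) <= rsum m (fun a => f (d a)).
Proof.
  intros F0 Hf HS HA Hd. pose proof HS as [HO _].
  assert (Hlam : forall l, (l < m)%nat -> lam l = rsum m (fun a => Q a l * Q a l * d a)).
  { intros l Hl. rewrite <- (spectral_rayleigh _ _ _ _ HS l Hl). apply rsum_ext; intros a Ha.
    unfold col. rewrite (rsum_ext m _ (fun b => kd a b * (Q a l * d a * Q b l)))
      by (intros; rewrite HA by auto; ring).
    rewrite rsum_kd_r by auto. ring. }
  set (r := fun a => rsum m (fun l => Q a l * Q a l)).
  assert (Hr : forall a, (a < m)%nat -> r a <= 1) by (intros; apply orthogonal_row_norm_le; auto).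
  assert (Hr1 : forall a, (a < m)%nat -> (1 - r a) * d a = 0).
  { apply rsum_nonneg_eq0.
    - intros a Ha. apply Rmult_le_pos; auto. specialize (Hr a Ha). lra.
    - rewrite (rsum_ext m _ (fun a => d a - rsum m (fun l => Q a l * Q a l * d a)))
        by (intros; unfold r; rewrite rsum_scal_r; ring).
      rewrite rsum_minus, rsum_swap, <- (rsum_ext m _ _ Hlam), <- (spectral_trace _ _ _ _ HS).
      unfold mtrace. rewrite (rsum_ext m (fun i => A i i) d)
        by (intros; rewrite HA by auto; unfold kd; rewrite Nat.eqb_refl; ring).
      ring. }
  eapply Rle_trans.
  { apply rsum_le; intros l Hl. rewrite Hlam by auto.
    apply jensen_substochastic; auto.
    - intros; apply Rle_0_sqr.
    - right. rewrite (HO l l Hl Hl), Nat.eqb_refl. reflexivity. }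
  right. rewrite rsum_swap. apply rsum_ext; intros a Ha.
  rewrite rsum_scal_r. fold (r a).
  destruct (Req_dec (d a) 0) as [E|E].
  - rewrite E, F0. ring.
  - specialize (Hr1 a Ha). apply Rmult_integral in Hr1.
    destruct Hr1 as [Hra|]; [|contradiction]. replace (r a) with 1 by lra. ring.
Qed.

Lemma delta_symmetric m j : symmetric m (delta j).
Proof. intros a b _ _. unfold delta. rewrite Bool.andb_comm. reflexivity. Qed.

(* delta j is a projection, so its eigenvalues lam_l = Q_jl^2 satisfy Q_jl = lam_l Q_jl. *)
Lemma spectral_delta (f : R -> R) m j Q lam : f 0 = 0 -> (j < m)%nat ->
  spectral m (delta j) Q lam -> rsum m (fun l => f (lam l)) = f 1.
Proof.
  intros F0 Hj HS.
  assert (Hdelta : forall a b, delta j a b = kd a j * kd b j)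
    by (intros; unfold delta, kd; destruct (Nat.eqb a j), (Nat.eqb b j); simpl; ring).
  assert (Hsq : forall l, (l < m)%nat -> lam l = Q j l * Q j l).
  { intros l Hl. rewrite <- (spectral_rayleigh _ _ _ _ HS l Hl). unfold quad, col.
    rewrite (rsum_ext m _ (fun a => kd a j * (Q a l * Q j l))).
    - apply (rsum_kd_l m j (fun a => Q a l * Q j l)); auto.
    - intros a Ha. rewrite (rsum_ext m _ (fun b => kd b j * (kd a j * Q a l * Q b l)))
        by (intros; rewrite Hdelta; ring).
      rewrite rsum_kd_l by auto. ring. }
  assert (Hfix : forall l, (l < m)%nat -> Q j l = lam l * Q j l).
  { intros l Hl. rewrite <- (spectral_eigenvector _ _ _ _ HS l j Hl Hj).
    rewrite (rsum_ext m _ (fun b => kd b j * Q b l)) by (intros; rewrite Hdelta; unfold kd;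
      rewrite Nat.eqb_refl; ring).
    symmetry; apply (rsum_kd_l m j (fun b => Q b l)); auto. }
  rewrite (rsum_ext m _ (fun l => lam l * f 1)).
  - rewrite rsum_scal_r, <- (spectral_trace _ _ _ _ HS).
    replace (mtrace m (delta j)) with 1; [ring|].
    unfold mtrace. rewrite (rsum_ext m _ (fun i => kd i j * 1)) by (intros; rewrite Hdelta;
      unfold kd; destruct (Nat.eqb i j); ring).
    symmetry; apply rsum_kd_l; auto.
  - intros l Hl. destruct (Req_dec (Q j l) 0) as [E|E].
    + rewrite (Hsq l Hl), E, Rmult_0_l, F0. ring.
    + replace (lam l) with 1; [ring|].
      apply (Rmult_eq_reg_r (Q j l)); auto. rewrite <- Hfix by auto. ring.
Qed.

Definition eigenvalues m (A : mat) : nat -> R := snd (spec_choice m A).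

Lemma trf_eigenvalues m f A : trf m f A = rsum m (fun k => f (eigenvalues m A k)).
Proof. reflexivity. Qed.

Lemma eigenvalues_spectral m A : symmetric m A ->
  spectral m A (fst (spec_choice m A)) (eigenvalues m A).
Proof. apply spec_choice_spectral. Qed.

Lemma density_eigenvalues_nonneg m A k : density m A -> (k < m)%nat -> 0 <= eigenvalues m A k.
Proof.
  intros [HA [HP _]] Hk. apply (spectral_psd_nonneg m A (fst (spec_choice m A))); auto.
  apply eigenvalues_spectral; auto.
Qed.

Lemma density_eigenvalues_sum m A : density m A -> rsum m (eigenvalues m A) = 1.
Proof.
  intros [HA [_ Htr]]. rewrite <- Htr. symmetry.
  apply (spectral_trace m A (fst (spec_choice m A))). apply eigenvalues_spectral; auto.
Qed.

Lemma density_eigenvalues_le_1 m A k : density m A -> (k < m)%nat -> eigenvalues m A k <= 1.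
Proof.
  intros HA Hk. rewrite <- (density_eigenvalues_sum m A HA).
  apply rsum_nonneg_term_le; auto. intros; apply density_eigenvalues_nonneg; auto.
Qed.

Lemma mwsum_symmetric m n w rho : (forall j, (j < n)%nat -> symmetric m (rho j)) ->
  symmetric m (mwsum n w rho).
Proof. intros H a b Ha Hb. unfold mwsum. apply rsum_ext; intros j Hj. rewrite H; auto. Qed.

Section Weights.
Variables (m n : nat) (w : nat -> R).
Hypothesis Hw : forall j, (j < n)%nat -> 0 <= w j.

Lemma trf_mwsum_ge (f : R -> R) rho : f 0 = 0 -> has_supporting_lines f -> rsum n w = 1 ->
  (forall j, (j < n)%nat -> density m (rho j)) ->
  rsum n (fun j => rsum m (fun k => f (w j * eigenvalues m (rho j) k))) <= trf m f (mwsum n w rho).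
Proof.
  intros F0 Hf Hw1 Hrho.
  apply (mixture_majorization f m n w rho (fun j => fst (spec_choice m (rho j))) _
           (fst (spec_choice m (mwsum n w rho)))); auto.
  - intros j Hj. apply eigenvalues_spectral, Hrho; auto.
  - intros; apply density_eigenvalues_nonneg; auto.
  - intros; apply density_eigenvalues_sum; auto.
  - apply eigenvalues_spectral, mwsum_symmetric. intros; apply Hrho; auto.
Qed.

Lemma trf_mwsum_delta_le (f : R -> R) : f 0 = 0 -> has_supporting_lines f -> (n <= m)%nat ->
  trf m f (mwsum n w delta) <= rsum n (fun j => f (w j)).
Proof.
  intros F0 Hf Hnm.
  set (d := fun a => rsum n (fun j => kd a j * w j)).
  assert (Hd : forall a, (a < n)%nat -> d a = w a) by (intros; apply rsum_kd_r; auto).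
  assert (Hd0 : forall a, (n <= a)%nat -> d a = 0).
  { intros a Ha. apply rsum_zero. intros j Hj. unfold kd. destruct (Nat.eqb_spec a j); [lia | ring]. }
  eapply Rle_trans.
  - apply (spectral_diagonal_le f m (mwsum n w delta) (fst (spec_choice m (mwsum n w delta)))
             _ d); auto.
    + apply eigenvalues_spectral, mwsum_symmetric. intros; apply delta_symmetric.
    + intros a b _ _. unfold mwsum, d. rewrite <- rsum_scal_l. apply rsum_ext; intros j _.
      unfold delta, kd. destruct (Nat.eqb_spec a b), (Nat.eqb_spec a j), (Nat.eqb_spec b j);
        subst; simpl; try ring; lia.
    + intros a Ha. destruct (Nat.lt_ge_cases a n); [rewrite Hd | rewrite Hd0]; auto; lra.
  - right. replace m with (n + (m - n))%nat at 1 by lia. rewrite rsum_add_range.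
    rewrite (rsum_zero (m - n)) by (intros; rewrite Hd0, F0 by lia; reflexivity).
    rewrite Rplus_0_r. apply rsum_ext; intros. rewrite Hd; auto.
Qed.

End Weights.

Lemma trf_delta (f : R -> R) m j : f 0 = 0 -> (j < m)%nat -> trf m f (delta j) = f 1.
Proof.
  intros F0 Hj. apply (spectral_delta f m j (fst (spec_choice m (delta j)))); auto.
  apply eigenvalues_spectral, delta_symmetric.
Qed.

Lemma rsum_xlogx_scale m c (lam : nat -> R) : 0 <= c ->
  (forall k, (k < m)%nat -> 0 <= lam k) -> rsum m lam = 1 ->
  rsum m (fun k => xlogx (c * lam k)) = c * rsum m (fun k => xlogx (lam k)) + xlogx c.
Proof.
  intros Hc Hl Hl1.
  rewrite (rsum_ext m _ (fun k => c * xlogx (lam k) + lam k * xlogx c))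
    by (intros; apply xlogx_mult; auto).
  rewrite rsum_plus, rsum_scal_l, rsum_scal_r, Hl1. ring.
Qed.

Lemma rsum_rpow_scale m a c (lam : nat -> R) : 0 <= c -> (forall k, (k < m)%nat -> 0 <= lam k) ->
  rsum m (fun k => rpow (c * lam k) a) = rpow c a * rsum m (fun k => rpow (lam k) a).
Proof. intros Hc Hl. rewrite <- rsum_scal_l. apply rsum_ext; intros. apply rpow_mult; auto. Qed.

Lemma trf_rpow_density_le_1 m a A : 1 <= a -> density m A -> trf m (fun x => rpow x a) A <= 1.
Proof.
  intros Ha HA. rewrite trf_eigenvalues, <- (density_eigenvalues_sum m A HA).
  apply rsum_le; intros k Hk. apply rpow_le_id; auto.
  split; [apply density_eigenvalues_nonneg | apply density_eigenvalues_le_1]; auto.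
Qed.

Definition classical_tsallis n alpha (w : nat -> R) : R :=
  if Req_EM_T alpha 1 then - rsum n (fun j => xlogx (w j))
  else (rsum n (fun j => rpow (w j) alpha) - 1) / (1 - alpha).

Section Divergence.
Variables (alpha : R) (m n : nat) (w : nat -> R).
Hypothesis Halpha : 1 <= alpha.
Hypothesis Hw : forall j, (j < n)%nat -> 0 <= w j.
Hypothesis Hw1 : rsum n w = 1.

Lemma weight_le_1 j : (j < n)%nat -> w j <= 1.
Proof. intros Hj. rewrite <- Hw1. apply rsum_nonneg_term_le; auto. Qed.

Lemma qJT_le_classical_tsallis rho : (forall j, (j < n)%nat -> density m (rho j)) ->
  qJT m n alpha w rho <= classical_tsallis n alpha w.
Proof.
  intros Hrho. unfold qJT, tsallis, classical_tsallis.
  destruct (Req_EM_T alpha 1) as [E1|E1].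
  - pose proof (trf_mwsum_ge m n w Hw xlogx rho xlogx_0 xlogx_supporting_lines Hw1 Hrho) as K.
    rewrite (rsum_ext n _ (fun j => w j * trf m xlogx (rho j) + xlogx (w j))), rsum_plus in K
      by (intros; apply rsum_xlogx_scale; auto;
          [intros; apply density_eigenvalues_nonneg | apply density_eigenvalues_sum]; auto).
    rewrite (rsum_ext n _ (fun j => -1 * (w j * trf m xlogx (rho j)))), rsum_scal_l
      by (intros; ring).
    lra.
  - set (f := fun x => rpow x alpha). set (t := fun j => trf m f (rho j)).
    pose proof (trf_mwsum_ge m n w Hw f rho (rpow_0 alpha) (rpow_supporting_lines alpha Halpha)
                  Hw1 Hrho) as K.
    rewrite (rsum_ext n _ (fun j => rpow (w j) alpha * t j)) in K
      by (intros; apply rsum_rpow_scale; auto; intros; apply density_eigenvalues_nonneg; auto).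
    assert (Hmix : rsum n (fun j => w j * ((t j - 1) / (1 - alpha)))
                   = (rsum n (fun j => w j * t j) - 1) / (1 - alpha)).
    { transitivity (rsum n (fun j => (w j * t j - w j) * / (1 - alpha)));
        [apply rsum_ext; intros; unfold Rdiv; ring |].
      rewrite rsum_scal_r, rsum_minus. change (rsum n (fun j => w j)) with (rsum n w).
      rewrite Hw1. reflexivity. }
    change (fun x => rpow x alpha) with f.
    change (rsum n (fun j => w j * ((trf m f (rho j) - 1) / (1 - alpha))))
      with (rsum n (fun j => w j * ((t j - 1) / (1 - alpha)))).
    rewrite Hmix.
    assert (Hgain : rsum n (fun j => rpow (w j) alpha) - 1
                    <= rsum n (fun j => rpow (w j) alpha * t j) - rsum n (fun j => w j * t j)).
    { rewrite <- Hw1, <- !rsum_minus. apply rsum_le; intros j Hj.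
      assert (rpow (w j) alpha <= w j) by (apply rpow_le_id; auto; split; auto; apply weight_le_1; auto).
      assert (t j <= 1) by (apply trf_rpow_density_le_1; auto).
      nra. }
    assert (Inv : / (1 - alpha) < 0) by (apply Rinv_lt_0_compat; lra).
    unfold Rdiv. nra.
Qed.

Lemma classical_tsallis_le_qJT_delta : (n <= m)%nat ->
  classical_tsallis n alpha w <= qJT m n alpha w delta.
Proof.
  intros Hnm. unfold qJT, tsallis, classical_tsallis.
  destruct (Req_EM_T alpha 1) as [E1|E1].
  - pose proof (trf_mwsum_delta_le m n w Hw xlogx xlogx_0 xlogx_supporting_lines Hnm) as K.
    rewrite (rsum_zero n (fun j => w j * - trf m xlogx (delta j)))
      by (intros; rewrite trf_delta, xlogx_1 by (auto using xlogx_0; lia); ring).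
    lra.
  - pose proof (trf_mwsum_delta_le m n w Hw (fun x => rpow x alpha) (rpow_0 alpha)
                  (rpow_supporting_lines alpha Halpha) Hnm) as K.
    rewrite (rsum_zero n (fun j => w j * ((trf m (fun x => rpow x alpha) (delta j) - 1) / (1 - alpha))))
      by (intros; rewrite trf_delta, rpow_1 by (auto using rpow_0; lia); unfold Rdiv; ring).
    assert (Inv : / (1 - alpha) < 0) by (apply Rinv_lt_0_compat; lra).
    unfold Rdiv. nra.
Qed.

End Divergence.

Theorem proposition3 (alpha : R) (m n : nat) (w : nat -> R) :
  1 <= alpha <= 2 ->
  (1 <= n)%nat -> (n <= m)%nat ->
  (forall j, (j < n)%nat -> 0 <= w j) ->
  rsum n w = 1 ->
  forall rho : nat -> mat,
    (forall j, (j < n)%nat -> density m (rho j)) ->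
    qJT m n alpha w rho <= qJT m n alpha w delta.
Proof.
  intros [Halpha _] _ Hnm Hw Hw1 rho Hrho.
  apply Rle_trans with (classical_tsallis n alpha w).
  - apply qJT_le_classical_tsallis; auto.
  - apply classical_tsallis_le_qJT_delta; auto.
Qed.
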